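(* Let $n\ge1$ and define automorphisms $a,b,c,d_1,\dots,d_n$ of the binary rooted tree $\mathcal{T}_2$ (vertex set the finite words over $\{0,1\}$) recursively by the wreath recursions $a=(0~1)(c,b)$, $b=(0~1)(b,c)$, $c=\sigma_0(d_1,d_1)$, $d_i=\sigma_i(d_{i+1},d_{i+1})$ for $1\le i\le n-1$, $d_n=\sigma_n(a,a)$, where $\sigma_1=(0~1)$ and $\sigma_i=\mathrm{id}$ for all $i\neq1$ (including $\sigma_0$). Then $a$ acts transitively on each level of $\mathcal{T}_2$ (i.e. on the set of words of length $m$, for every $m\ge0$).
   Context: The wreath recursion $f=\pi(f_0,f_1)$ (with $\pi\in S_2$ a permutation of $\{0,1\}$ and $f_0,f_1\in\mathrm{Aut}(\mathcal{T}_2)$) means $f(xw)=\pi(x)\,f_x(w)$ for $x\in\{0,1\}$ and words $w$. *)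

(* Vertices of T_2 = finite words over {0,1}, encoded as
   seq bool (false = 0, true = 1). *)
From mathcomp Require Import all_boot.
Set Implicit Arguments. Unset Strict Implicit. Unset Printing Implicit Defensive.

Inductive state := SA | SB | SC | SD of nat.

Definition sigma_flip (i : nat) : bool := i == 1.

(* Wreath recursion data for parameter n: (does the root permutation swap?,
   section at 0, section at 1). *)
Definition rule (n : nat) (s : state) : bool * state * state :=
  match s with
  | SA => (true, SC, SB)
  | SB => (true, SB, SC)
  | SC => (sigma_flip 0, SD 1, SD 1)
  | SD i => if i < n then (sigma_flip i, SD i.+1, SD i.+1)
            else (sigma_flip i, SA, SA)
  end.

Fixpoint act (n : nat) (s : state) (w : seq bool) : seq bool :=
  match w with
  | [::] => [::]
  | x :: w' =>
      let: (p, s0, s1) := rule n s in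
      (if p then ~~ x else x) :: act n (if x then s1 else s0) w'
  end.

From mathcomp Require Import all_boot.

(* For a product L of states, consider the parity of the number of vertices of
   level k at which L swaps its two subtrees.  When all these parities are
   odd, L swaps the first letter, so it or its square moves any first letter
   to any other.  The square fixes the first letter and acts below it as a
   product of sections whose level-k parity is the level-(k+1) parity of L,
   hence again odd on every level, and induction on the word length applies.
   For a every parity is odd: c is inactive with equal sections, so all its
   parities vanish, and a, b are active with sections b and c.  The states
   d_i are never involved. *)

Section ProductsOfStates.

Variable n : nat.

Definition section (s : state) (x : bool) : state :=
  if x then (rule n s).2 else (rule n s).1.2.

Lemma act_cons s x w :
  act n s (x :: w) = ((rule n s).1.1 (+) x) :: act n (section s x) w.
Proof. by rewrite /= /section; case: (rule n s) => [[[] s0] s1]. Qed.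

Fixpoint level_parity (k : nat) (s : state) : bool :=
  if k is k'.+1 then
    level_parity k' (section s false) (+) level_parity k' (section s true)
  else (rule n s).1.1.

Definition seq_parity (k : nat) (L : seq state) : bool :=
  foldr (fun s b => level_parity k s (+) b) false L.

Lemma seq_parity_cat k A B :
  seq_parity k (A ++ B) = seq_parity k A (+) seq_parity k B.
Proof. by elim: A => [//|s A IH] /=; rewrite IH addbA. Qed.

Fixpoint act_seq (L : seq state) (w : seq bool) : seq bool :=
  if L is s :: L' then act n s (act_seq L' w) else w.

Lemma act_seq_cat A B w : act_seq (A ++ B) w = act_seq A (act_seq B w).
Proof. by elim: A => [//|s A IH] /=; rewrite IH. Qed.

Lemma size_act s w : size (act n s w) = size w.
Proof. by elim: w s => [//|x w IH] s; rewrite act_cons /= IH. Qed.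

Lemma size_act_seq L w : size (act_seq L w) = size w.
Proof. by elim: L => [//|s L IH] /=; rewrite size_act IH. Qed.

Fixpoint sections (L : seq state) (x : bool) : seq state :=
  if L is s :: L' then section s (seq_parity 0 L' (+) x) :: sections L' x
  else [::].

Lemma act_seq_cons L x w :
  act_seq L (x :: w) = (seq_parity 0 L (+) x) :: act_seq (sections L x) w.
Proof. by elim: L => [//|s L IH] /=; rewrite IH act_cons addbA. Qed.

Lemma seq_parity_sections k L :
  seq_parity k (sections L false ++ sections L true) = seq_parity k.+1 L.
Proof.
elim: L => [//|s L IH]; rewrite seq_parity_cat in IH.
rewrite seq_parity_cat /= -IH addbF addbT addbACA.
by case: (seq_parity 0 L); rewrite /section //= (addbC (level_parity k _)).
Qed.

Definition square_sections (L : seq state) (x : bool) : seq state :=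
  sections L (~~ x) ++ sections L x.

Lemma seq_parity_square_sections k L x :
  seq_parity k (square_sections L x) = seq_parity k.+1 L.
Proof.
by rewrite /square_sections seq_parity_cat -seq_parity_sections seq_parity_cat;
  case: x => //=; rewrite addbC.
Qed.

Lemma iter_act_seq_double L x w j : seq_parity 0 L ->
  iter j.*2 (act_seq L) (x :: w) = x :: iter j (act_seq (square_sections L x)) w.
Proof.
move=> odd0; elim: j => [//|j IH].
by rewrite doubleS !iterS IH !act_seq_cons odd0 /= negbK act_seq_cat.
Qed.

Definition level_transitive (f : seq bool -> seq bool) : Prop :=
  forall m u v, size u = m -> size v = m -> exists j, iter j f u = v.

Lemma odd_parity_level_transitive L :
  (forall k, seq_parity k L) -> level_transitive (act_seq L).
Proof.
move=> oddL m; elim: m L oddL => [|m IH] L oddL [|x w] [|y w'] //=.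
  by exists 0.
move=> [size_w] [size_w'].
have fix_first z t : size t = m ->
    exists j, iter j (act_seq L) (z :: t) = z :: w'.
  move=> size_t; have oddS k : seq_parity k (square_sections L z).
    by rewrite seq_parity_square_sections.
  have [j <-] := IH _ oddS t w' size_t size_w'.
  by exists j.*2; rewrite iter_act_seq_double.
have [<-|neq_xy] := eqVneq x y; first exact: fix_first.
have [j move_tail] := fix_first (~~ x) (act_seq (sections L x) w)
  (etrans (size_act_seq _ _) size_w).
exists j.+1; rewrite iterSr act_seq_cons oddL {}move_tail.
by move: neq_xy; case: x; case: y.
Qed.

Lemma level_parity_SC k : level_parity k SC = false.
Proof. by case: k => //= k; rewrite addbb. Qed.

Lemma level_parity_SB k : level_parity k SB.
Proof. by elim: k => //= k ->; rewrite level_parity_SC. Qed.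

Lemma level_parity_SA k : level_parity k SA.
Proof. by case: k => //= k; rewrite level_parity_SC level_parity_SB. Qed.

End ProductsOfStates.

Theorem mainTheorem6 (n : nat) (hn : 1 <= n) (m : nat) (u v : seq bool) :
  size u = m -> size v = m -> exists k : nat, iter k (act n SA) u = v.
Proof.
move=> size_u size_v.
have oddA k : seq_parity n k [:: SA] by rewrite /= level_parity_SA.
have [k <-] := @odd_parity_level_transitive n _ oddA _ _ _ size_u size_v.
by exists k; apply: eq_iter.
Qed.
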